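(* Let $H$ be an undirected graph and let $\vec H$ be any acyclic orientation of $H$. Then $\mathrm{dtw}(\vec H)\le\mathrm{tw}(H)+1$.
   Context: For a DAG $\vec H$, a source is a vertex of in-degree $0$; $S$ denotes the set of sources; $R(s)$ is the set of vertices reachable from $s$, and $R(B)=\bigcup_{s\in B}R(s)$. A DAG tree decomposition of $\vec H$ is a tree $T$ whose nodes (bags) are subsets of $S$ such that every source lies in some bag and, for any bags $B,B_1,B_2$ with $B$ on the path between $B_1$ and $B_2$ in $T$, $R(B_1)\cap R(B_2)\subseteq R(B)$; its width is the maximum bag size and $\mathrm{dtw}(\vec H)$ is the minimum width. $\mathrm{tw}$ is the usual treewidth. *)

From mathcomp Require Import all_boot.
Set Implicit Arguments. Unset Strict Implicit. Unset Printing Implicit Defensive.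

Definition undirected_graph (V : finType) (e : rel V) : Prop :=
  symmetric e /\ irreflexive e.

Definition orientation (V : finType) (e d : rel V) : Prop :=
  (forall x y, e x y = d x y || d y x) /\ (forall x y, d x y -> ~~ d y x).

Definition acyclic_digraph (V : finType) (d : rel V) : Prop :=
  forall x y, d x y -> ~~ connect d y x.

Definition is_tree (I : finType) (t : rel I) : Prop :=
  [/\ 0 < #|I|, symmetric t, irreflexive t,
      (forall i j, connect t i j) &
      (forall x p, uniq (x :: p) -> path t x p -> 2 <= size p ->
                   ~~ t (last x p) x)].

Definition on_tree_path (I : finType) (t : rel I) (i j k : I) : Prop :=
  exists p : seq I,
    [/\ path t i p, last i p = j, uniq (i :: p) & k \in i :: p].

Definition tree_decomposition (V : finType) (e : rel V)
    (I : finType) (t : rel I) (bag : I -> {set V}) : Prop :=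
  [/\ is_tree t,
      (forall v, exists i, v \in bag i),
      (forall u v, e u v -> exists i, (u \in bag i) && (v \in bag i)) &
      (forall i j k, on_tree_path t i j k -> bag i :&: bag j \subset bag k)].

(* width = maximum bag size minus one;  tw_le e k  <->  tw(e) <= k *)
Definition tw_le (V : finType) (e : rel V) (k : nat) : Prop :=
  exists (I : finType) (t : rel I) (bag : I -> {set V}),
    tree_decomposition e t bag /\ forall i, #|bag i| <= k.+1.

Definition is_source (V : finType) (d : rel V) (s : V) : bool :=
  [forall x, ~~ d x s].

Definition sources (V : finType) (d : rel V) : {set V} :=
  [set s | is_source d s].

Definition reach (V : finType) (d : rel V) (s : V) : {set V} :=
  [set v | connect d s v].

Definition reachB (V : finType) (d : rel V) (B : {set V}) : {set V} :=
  \bigcup_(s in B) reach d s.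

Definition dag_tree_decomposition (V : finType) (d : rel V)
    (I : finType) (t : rel I) (bag : I -> {set V}) : Prop :=
  [/\ is_tree t,
      (forall i, bag i \subset sources d),
      (forall s, s \in sources d -> exists i, s \in bag i) &
      (forall i j k, on_tree_path t i j k ->
         reachB d (bag i) :&: reachB d (bag j) \subset reachB d (bag k))].

(* width = maximum bag size;  dtw_le d k  <->  dtw(d) <= k *)
Definition dtw_le (V : finType) (d : rel V) (k : nat) : Prop :=
  exists (I : finType) (t : rel I) (bag : I -> {set V}),
    dag_tree_decomposition d t bag /\ forall i, #|bag i| <= k.

From mathcomp Require Import all_boot.
Set Implicit Arguments. Unset Strict Implicit. Unset Printing Implicit Defensive.

(* Send every vertex w to a canonical source src w reaching it (the least one
   in a fixed enumeration, so that src is constant along directed paths from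
   src a to a), and replace each bag B of a tree decomposition of H by src(B);
   the width grows from |B| - 1 to at most |B|.  If v is reachable from both
   src a and src b, with a, b in bags B_i and B_j, then the vertices x with
   v in R(src x) contain every ancestor of v and every directed path from
   src a to a, hence induce a connected subgraph of H containing a and b.
   Such a subgraph meets every bag B_k on the tree path between B_i and B_j,
   and a vertex u of it in B_k gives the source src u of the new bag that
   reaches v. *)

Section TreePaths.
Variables (I : finType) (t : rel I).

(* The bound S lets [on_path_within_meet] keep the paths it extends
   duplicate-free. *)
Definition on_path_within (S : seq I) (i j k : I) : Prop :=
  exists p : seq I,
    [/\ path t i p, last i p = j, uniq (i :: p), k \in i :: p &
        {subset i :: p <= S}].

Lemma on_path_within_tree_path S i j k :
  on_path_within S i j k -> on_tree_path t i j k.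
Proof. by case=> p [? ? ? ? _]; exists p. Qed.

Lemma on_path_within_sub S S' i j k : {subset S <= S'} ->
  on_path_within S i j k -> on_path_within S' i j k.
Proof. by move=> sSS' [p [? ? ? ? sp]]; exists p; split=> // z /sp /sSS'. Qed.

Lemma on_path_within_rcons S i x y k : t x y -> y \notin S ->
  on_path_within S i x k -> on_path_within (y :: S) i y k.
Proof.
move=> txy yS [p [tp lp up kp sp]]; exists (rcons p y); split.
- by rewrite rcons_path tp lp.
- by rewrite last_rcons.
- by rewrite -rcons_cons rcons_uniq up andbT; apply: contra yS => /sp.
- by rewrite -rcons_cons mem_rcons inE kp orbT.
- move=> z; rewrite -rcons_cons mem_rcons !inE.
  by case/orP=> [/eqP-> | /sp ->]; rewrite ?eqxx ?orbT.
Qed.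

Lemma on_path_within_cons S x j y k : t y x -> y \notin S ->
  on_path_within S x j k -> on_path_within (y :: S) y j k.
Proof.
move=> tyx yS [p [tp lp up kp sp]]; exists (x :: p); split=> //.
- by rewrite /= tyx.
- by rewrite cons_uniq up andbT; apply: contra yS => /sp.
- by rewrite inE kp orbT.
- by move=> z; rewrite !inE => /orP[/eqP-> | /sp ->]; rewrite ?eqxx ?orbT.
Qed.

Lemma on_path_within_split i p x k : path t i p -> uniq (i :: p) ->
  k \in i :: p -> x \in i :: p ->
  on_path_within (i :: p) i x k \/ on_path_within (i :: p) x (last i p) k.
Proof.
move=> tp up kp xp; case/splitPl: xp tp up kp => p1 p2 lp1.
rewrite cat_path -cat_cons cat_uniq mem_cat => /andP[tp1 tp2] /and3P[up1 dis up2].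
have x_p1 : x \in i :: p1 by rewrite -lp1 mem_last.
case/orP=> [kp1 | kp2]; [left; exists p1 | right; exists p2]; split => //.
- by move=> z zp1; rewrite mem_cat zp1.
- by rewrite -lp1.
- by rewrite last_cat lp1.
- by rewrite /= up2 andbT; apply: contra dis => xp2; apply/hasP; exists x.
- by rewrite inE kp2 orbT.
- by move=> z; rewrite inE mem_cat => /orP[/eqP-> | ->]; rewrite ?x_p1 ?orbT.
Qed.

Hypothesis t_sym : symmetric t.

Lemma on_path_within_meet i p k : path t i p -> uniq (i :: p) -> k \in i :: p ->
  forall i' q, path t i' q -> uniq (i' :: q) -> last i' q \in i :: p ->
  on_path_within (i :: p ++ i' :: q) i i' k \/
  on_path_within (i :: p ++ i' :: q) i' (last i p) k.
Proof.
move=> tp up kp i' q; elim: q i' => [|x q IHq] i' tq uq lq.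
  by case: (on_path_within_split tp up kp lq) => H; [left | right];
    apply: on_path_within_sub H => z zp; rewrite -cat_cons mem_cat zp.
have sub : {subset i :: p <= i :: p ++ i' :: x :: q}.
  by move=> z zp; rewrite -cat_cons mem_cat zp.
have [i'p | i'Np] := boolP (i' \in i :: p).
  by case: (on_path_within_split tp up kp i'p) => H; [left | right];
    apply: on_path_within_sub H.
move: tq uq => /= /andP[ti'x tq] /andP[i'Nq uq].
have i'NS : i' \notin i :: p ++ x :: q by rewrite -cat_cons mem_cat negb_or i'Np.
have sub' : {subset i' :: i :: p ++ x :: q <= i :: p ++ i' :: x :: q}.
  move=> z; rewrite inE -!cat_cons !mem_cat !inE.
  by case/orP=> [-> | /orP[-> | /orP[-> | ->]]]; rewrite ?orbT.
case: (IHq x tq uq lq) => H; [left | right]; apply: on_path_within_sub sub' _.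
  by apply: on_path_within_rcons H; rewrite // t_sym.
exact: on_path_within_cons H.
Qed.

Lemma on_tree_path_split i j k i' : connect t i' j ->
  on_tree_path t i j k -> on_tree_path t i i' k \/ on_tree_path t i' j k.
Proof.
case/connectP=> q0 /shortenP[q tq uq _] -> [p [tp lp up kp]].
have lq : last i' q \in i :: p by rewrite -lp mem_last.
case: (on_path_within_meet tp up kp tq uq lq) => /on_path_within_tree_path;
  by [left | rewrite lp; right].
Qed.

End TreePaths.

Definition induced_rel (T : Type) (G : pred T) (e : rel T) : rel T :=
  [rel x y | [&& G x, G y & e x y]].

Lemma induced_rel_sym (T : Type) (G : pred T) (e : rel T) :
  symmetric e -> symmetric (induced_rel G e).
Proof. by move=> e_sym x y; rewrite /induced_rel /= e_sym andbCA. Qed.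

Section TreeDecompositionSeparation.
Variables (V I : finType) (e : rel V) (t : rel I) (bag : I -> {set V}).
Hypothesis td : tree_decomposition e t bag.

Lemma tree_decomposition_connect_meets_bag (G : pred V) u w i j k :
  connect (induced_rel G e) u w -> G u -> u \in bag i -> w \in bag j ->
  on_tree_path t i j k -> exists2 x, G x & x \in bag k.
Proof.
case: td => [[_ t_sym _ t_conn _] _ e_bag bag_interp].
case/connectP=> p + ->; elim: p u i => [|y p IHp] u i /=.
  move=> _ Gu ui uj /bag_interp /subsetP/(_ u).
  by rewrite inE ui uj => /(_ isT) uk; exists u.
case/andP=> /and3P[_ Gy euy] Gp Gu ui py_j.
have [i' /andP[ui' yi']] := e_bag _ _ euy.
case/(on_tree_path_split t_sym (t_conn i' j)) => [ii'k | i'jk].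
  have /subsetP/(_ u) := bag_interp _ _ _ ii'k.
  by rewrite inE ui ui' => /(_ isT) uk; exists u.
exact: IHp y i' Gp Gy yi' py_j i'jk.
Qed.

End TreeDecompositionSeparation.

Section Sources.
Variables (V : finType) (d : rel V).

Lemma connect_to_source y s : connect d y s -> is_source d s -> y = s.
Proof.
case/connectP=> p + ->; case/lastP: p => [//|p x].
rewrite rcons_path last_rcons => /andP[_ dx] /forallP/(_ (last y p)).
by rewrite dx.
Qed.

Hypothesis d_acyclic : acyclic_digraph d.

Lemma exists_source_connect w : exists s, connect d s w && is_source d s.
Proof.
pose ancestors y := [set z | connect d z y].
have [y yw ymin] :=
  @arg_minnP _ w (connect d ^~ w) (fun y => #|ancestors y|) (connect0 d w).
exists y; rewrite yw; apply/forallP => x; apply/negP => dxy.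
have : #|ancestors x| < #|ancestors y|.
  apply/proper_card/properP; split.
    by apply/subsetP => z; rewrite !inE => /connect_trans; apply; apply: connect1.
  by exists y; rewrite !inE ?connect0 ?d_acyclic.
by rewrite ltnNge ymin // (connect_trans (connect1 dxy)).
Qed.

Definition source_of (w : V) : V :=
  [arg min_(s < xchoose (exists_source_connect w) |
            connect d s w && is_source d s) enum_rank s].

Lemma source_ofP w :
  [/\ connect d (source_of w) w, is_source d (source_of w) &
      forall s, connect d s w -> is_source d s ->
        enum_rank (source_of w) <= enum_rank s].
Proof.
rewrite /source_of; case: (arg_minnP _ (xchooseP (exists_source_connect w))).
by move=> s /andP[sw ss] smin; split=> // s' s'w s's; rewrite smin ?s'w.
Qed.

Lemma source_of_source s : is_source d s -> source_of s = s.
Proof. by have [ss _ _] := source_ofP s; apply: connect_to_source. Qed.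

Lemma source_of_between a w :
  connect d (source_of a) w -> connect d w a -> source_of w = source_of a.
Proof.
move=> aw wa; have [sa_a sa_src sa_min] := source_ofP a.
have [sw_w sw_src sw_min] := source_ofP w.
apply/enum_rank_inj/val_inj/eqP; rewrite eqn_leq sw_min //=.
by rewrite sa_min // (connect_trans sw_w wa).
Qed.

End Sources.

Section SourceBags.
Variables (V : finType) (e d : rel V).
Hypotheses (e_sym : symmetric e) (e_d : orientation e d).
Hypothesis d_acyclic : acyclic_digraph d.

Lemma connect_induced_orientation (G : pred V) u w : connect d u w ->
  (forall x, connect d u x -> connect d x w -> G x) ->
  connect (induced_rel G e) u w.
Proof.
case: e_d => e_dd _; case/connectP=> p + ->.
elim: p u => [|y p IHp] u /=; first by rewrite connect0.
case/andP=> duy dp G_between.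
have yw : connect d y (last y p) by apply/connectP; exists p.
have Gu : G u := G_between u (connect0 _ _) (connect_trans (connect1 duy) yw).
have Gy : G y := G_between y (connect1 duy) yw.
have uy : induced_rel G e u y by rewrite /induced_rel /= Gu Gy e_dd duy.
apply: connect_trans (connect1 uy) (IHp y dp _) => x yx.
exact/G_between/connect_trans/yx/connect1.
Qed.

Local Notation src := (source_of d_acyclic).

Variables (I : finType) (t : rel I) (bag : I -> {set V}).
Hypothesis td : tree_decomposition e t bag.

Definition source_bag (i : I) : {set V} := src @: bag i.

Lemma source_bag_interpolation i j k : on_tree_path t i j k ->
  reachB d (source_bag i) :&: reachB d (source_bag j) \subset reachB d (source_bag k).
Proof.
move=> ijk; apply/subsetP => v; rewrite inE.
case/andP=> /bigcupP[_ /imsetP[a ai ->]] + /bigcupP[_ /imsetP[b bj ->]].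
rewrite !inE => av bv.
pose G x := connect d (src x) v.
have src_conn x : connect d (src x) x by case: (source_ofP d_acyclic x).
have G_anc x : connect d x v -> G x by apply: connect_trans.
have src_G x : G x -> connect (induced_rel G e) (src x) x.
  move=> Gx; apply: connect_induced_orientation => // y xy yx.
  by rewrite /G (source_of_between xy yx).
have anc_G x : connect d x v -> connect (induced_rel G e) x v.
  by move=> xv; apply: connect_induced_orientation => // y _; apply: G_anc.
have ab : connect (induced_rel G e) a b.
  have G_sym := sym_connect_sym (induced_rel_sym G e_sym).
  have av' : connect (induced_rel G e) a v.
    by apply: connect_trans (anc_G _ av); rewrite G_sym src_G.
  have vb : connect (induced_rel G e) v b.
    by apply: connect_trans (src_G _ bv); rewrite G_sym anc_G.
  exact: connect_trans av' vb.
have [u Gu uk] := tree_decomposition_connect_meets_bag td ab av ai bj ijk.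
by apply/bigcupP; exists (src u); rewrite ?imset_f ?inE.
Qed.

Lemma dag_tree_decomposition_source_bag : dag_tree_decomposition d t source_bag.
Proof.
case: (td) => t_tree bag_cover _ _; split=> //.
- move=> i; apply/subsetP => _ /imsetP[x _ ->]; rewrite inE.
  by case: (source_ofP d_acyclic x).
- move=> s; rewrite inE => s_src; have [i si] := bag_cover s.
  by exists i; rewrite -(source_of_source d_acyclic s_src) imset_f.
- exact: source_bag_interpolation.
Qed.

End SourceBags.

Theorem mainTheorem14 (V : finType) (e d : rel V) :
  undirected_graph e -> orientation e d -> acyclic_digraph d ->
  forall k : nat, tw_le e k -> dtw_le d k.+1.
Proof.
move=> [e_sym _] e_d d_acyclic k [I [t [bag [td bag_size]]]].
exists I, t, (source_bag d_acyclic bag); split.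
  exact: dag_tree_decomposition_source_bag td.
by move=> i; apply: leq_trans (leq_imset_card _ _) (bag_size i).
Qed.
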